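(* Let $(A_0,A_1,\partial_0,\partial_1,s)$ be a 1-truncated simplicial ring. Let $B=\{(f,g)\mid f,g\in A_1,\ \partial_1(f)=\partial_0(g)\}$, a subring of $A_1\times A_1$. Then the map $B\to A_1$, $(f,g)\mapsto f+g-s(a)$ with $a=\partial_1(f)=\partial_0(g)$, is a ring homomorphism if and only if $(\ker\partial_0)\cdot(\ker\partial_1)=0$.
   Context: Rings are commutative and unital. A 1-truncated simplicial ring is a collection of rings $A_0,A_1$ and ring homomorphisms $\partial_0,\partial_1:A_1\to A_0$, $s:A_0\to A_1$ with $\partial_0 s=\partial_1 s=\mathrm{id}_{A_0}$. *)

From HB Require Import structures.
From mathcomp Require Import all_boot all_order all_algebra.
Set Implicit Arguments. Unset Strict Implicit. Unset Printing Implicit Defensive.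
Import GRing.Theory.
Local Open Scope ring_scope.

Definition fiber_pred (A0 A1 : comPzRingType) (d0 d1 : A1 -> A0)
  : pred (A1 * A1)%type := fun fg => d1 fg.1 == d0 fg.2.

Definition glue_map (A0 A1 : comPzRingType) (d1 : A1 -> A0) (s : A0 -> A1)
  (fg : (A1 * A1)%type) : A1 := fg.1 + fg.2 - s (d1 fg.1).

Definition ring_hom_on (R S : pzRingType) (P : pred R) (phi : R -> S) : Prop :=
  [/\ phi 1 = 1,
      {in P &, forall x y, phi (x + y) = phi x + phi y} &
      {in P &, forall x y, phi (x * y) = phi x * phi y}].

(* (ker d0) * (ker d1) = 0 : every product of an element of ker d0 with
   an element of ker d1 vanishes (equivalently, the product ideal is 0). *)
Definition ker_prod_zero (A0 A1 : comPzRingType) (d0 d1 : A1 -> A0) : Prop :=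
  forall x y : A1, d0 x = 0 -> d1 y = 0 -> x * y = 0.

From HB Require Import structures.
From mathcomp Require Import all_boot all_order all_algebra.
From mathcomp Require Import ring.
Import GRing.Theory.
Local Open Scope ring_scope.

(* The glue map is always additive and unital, so only multiplicativity is at
   stake.  Expanding the product, glue (f, g) * glue (f', g') differs from
   glue (f f', g g') by (f - s a) (g' - s a') + (g - s a) (f' - s a'), where
   a = d1 f and a' = d1 f'; on B the factors f - s a, f' - s a' lie in ker d1
   and g - s a, g' - s a' in ker d0, so the defect vanishes when
   (ker d0) (ker d1) = 0.  Conversely, for y in ker d1 and x in ker d0 the
   pairs (y, 0) and (0, x) lie in B, glue to y and x, and multiply to 0. *)

Section GlueMap.

Variables (A0 A1 : comPzRingType).
Variables (d0 d1 : {rmorphism A1 -> A0}) (s : {rmorphism A0 -> A1}).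

Local Notation glue := (glue_map d1 s).

Lemma glue_map1 : glue 1 = 1.
Proof. by rewrite /glue_map /= !rmorph1 addrK. Qed.

Lemma glue_mapD fg fg' : glue (fg + fg') = glue fg + glue fg'.
Proof. by case: fg fg' => f g [f' g']; rewrite /glue_map /= !raddfD /=; ring. Qed.

Lemma glue_mapM_defect f g f' g' :
  glue (f, g) * glue (f', g') =
    glue ((f, g) * (f', g'))
    + (f - s (d1 f)) * (g' - s (d1 f')) + (g - s (d1 f)) * (f' - s (d1 f')).
Proof. by rewrite /glue_map /= !rmorphM /=; ring. Qed.

Lemma glue_map_kerl y : d1 y = 0 -> glue (y, 0) = y.
Proof. by move=> hy; rewrite /glue_map /= hy rmorph0 addr0 subr0. Qed.

Lemma glue_map_kerr x : glue (0, x) = x.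
Proof. by rewrite /glue_map /= !rmorph0 add0r subr0. Qed.

Lemma ker_prod_zero_of_ring_hom_on_glue :
  ring_hom_on (fiber_pred d0 d1) glue -> ker_prod_zero d0 d1.
Proof.
case=> _ _ glueM x y hx hy.
have By : fiber_pred d0 d1 (y, 0) by rewrite /fiber_pred /= hy rmorph0.
have Bx : fiber_pred d0 d1 (0, x) by rewrite /fiber_pred /= hx rmorph0.
have := glueM _ _ By Bx.
rewrite glue_map_kerl // glue_map_kerr [LHS]/glue_map /= mulr0 mul0r.
by rewrite !rmorph0 addr0 subr0 mulrC => <-.
Qed.

Hypotheses (d0s : cancel s d0) (d1s : cancel s d1).

Lemma ker_d1_sub_section f : d1 (f - s (d1 f)) = 0.
Proof. by rewrite rmorphB /= d1s subrr. Qed.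

Lemma ker_d0_sub_section {f g} : fiber_pred d0 d1 (f, g) -> d0 (g - s (d1 f)) = 0.
Proof. by move=> /eqP /= fg; rewrite rmorphB /= d0s fg subrr. Qed.

Lemma ring_hom_on_glue_of_ker_prod_zero :
  ker_prod_zero d0 d1 -> ring_hom_on (fiber_pred d0 d1) glue.
Proof.
move=> kerM; split; first exact: glue_map1.
  by move=> fg fg' _ _; exact: glue_mapD.
case=> f g [f' g'] Bfg Bfg'.
have k1 := kerM _ _ (ker_d0_sub_section Bfg') (ker_d1_sub_section f).
have k2 := kerM _ _ (ker_d0_sub_section Bfg) (ker_d1_sub_section f').
by rewrite glue_mapM_defect [(f - _) * _]mulrC k1 k2 !addr0.
Qed.

End GlueMap.

Theorem lemma3p4p5 (A0 A1 : comPzRingType)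
  (d0 d1 : {rmorphism A1 -> A0}) (s : {rmorphism A0 -> A1})
  (hd0s : forall a : A0, d0 (s a) = a) (hd1s : forall a : A0, d1 (s a) = a) :
  ring_hom_on (fiber_pred d0 d1) (glue_map d1 s) <-> ker_prod_zero d0 d1.
Proof.
split; first exact: ker_prod_zero_of_ring_hom_on_glue.
exact: ring_hom_on_glue_of_ker_prod_zero.
Qed.
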